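(* Let $E$, $(\cdot\,\cdot)$, $|\cdot|$, $v$, and $f$ be as in the continuous-solution construction below, and assume in addition that $v$ is a $C^\infty$-diffeomorphism. Define $r:\mathbb{R}\to\mathbb{R}$ by $v''=r\,v'$ and $s:E\times E\to E$ by $s(a,b)=r\big((ab)/|b|\big)|b|\,b$ for $b\ne0$, $s(a,0)=0$. Then $s(a,\lambda b)=\lambda^2 s(a,b)$ for all $\lambda\in\mathbb{R}$, $a,b\in E$, and every $g\in\mathrm{Geo}\,f$ is twice differentiable and satisfies $g''(t)+s(g(t),g'(t))=0$ on its domain.
   Context: $E$ is a real finite-dimensional inner product space with inner product $(a,b)\mapsto(ab)$ and norm $|\cdot|$; $v:\mathbb{R}\to\mathbb{R}$ is an odd homeomorphism. For $a\ne b$, $e=(a-b)/|a-b|$ and $v_{ab}(c)=c+(v((ce))-(ce))e$ (a bijection of $E$); $f:E\times E\times[0,1]\to E$ is $f(a,b,\gamma)=v_{ab}^{-1}((1-\gamma)v_{ab}(a)+\gamma v_{ab}(b))$ for $a\ne b$, $f(a,a,\gamma)=a$. $\mathrm{Geo}\,f$ is the set of maps $g:I\to E$ ($I\subset\mathbb{R}$ an open interval) such that for every $\tau\in I$ there exist $\alpha,\beta\in I$ with $\alpha<\tau<\beta$ and $g((1-\gamma)\alpha+\gamma\beta)=f(g(\alpha),g(\beta),\gamma)$ for all $\gamma\in[0,1]$. *)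

From HB Require Import structures.
From mathcomp Require Import all_boot all_order all_algebra.
From mathcomp Require Import all_classical all_reals all_analysis.
Set Implicit Arguments. Unset Strict Implicit. Unset Printing Implicit Defensive.
Import Order.TTheory GRing.Theory Num.Theory.
Import numFieldNormedType.Exports.
Local Open Scope classical_set_scope.
Local Open Scope ring_scope.

(* E is modelled as R^n = 'rV[R]_n with the standard (Euclidean) inner product. *)
Section Defs.
Variables (R : realType) (n : nat).
Notation E := 'rV[R]_n.

Definition ipdot (a b : E) : R := (a *m b^T) 0 0.
Definition ipnorm (a : E) : R := Num.sqrt (ipdot a a).

Definition edir (a b : E) : E := (ipnorm (a - b))^-1 *: (a - b).

Definition vab (v : R -> R) (a b : E) (c : E) : E :=
  c + (v (ipdot c (edir a b)) - ipdot c (edir a b)) *: edir a b.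

(* The inverse v_ab^{-1} is taken as the map v_ab built from the inverse vinv of v
   (for vinv the two-sided inverse of v, this is the two-sided inverse of v_ab). *)
Definition fgeo (v vinv : R -> R) (a b : E) (gamma : R) : E :=
  if a == b then a
  else vab vinv a b ((1 - gamma) *: vab v a b a + gamma *: vab v a b b).

Definition is_open_interval (I : set R) := open I /\ is_interval I.

Definition in_Geo (v vinv : R -> R) (I : set R) (g : R -> E) : Prop :=
  is_open_interval I /\
  forall tau, I tau ->
    exists alpha beta, [/\ I alpha, I beta, alpha < tau, tau < beta &
      forall gamma, 0 <= gamma <= 1 ->
        g ((1 - gamma) * alpha + gamma * beta) = fgeo v vinv (g alpha) (g beta) gamma].

Definition s_geo (r : R -> R) (a b : E) : E :=
  if b == 0 then 0 else (r (ipdot a b / ipnorm b) * ipnorm b) *: b.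

End Defs.

Definition smooth_fun (R : realType) (h : R -> R) : Prop :=
  forall (k : nat) (x : R), derivable (derive1n k h) x 1.

Definition odd_homeo (R : realType) (v vinv : R -> R) : Prop :=
  [/\ forall x, v (- x) = - v x, cancel v vinv, cancel vinv v,
      continuous v & continuous vinv].

Definition smooth_diffeo (R : realType) (v vinv : R -> R) : Prop :=
  [/\ cancel v vinv, cancel vinv v, smooth_fun v & smooth_fun vinv].

From HB Require Import structures.
From mathcomp Require Import all_boot all_order all_algebra.
From mathcomp Require Import all_classical all_reals all_analysis.
From mathcomp Require Import ring lra.
Import Order.TTheory GRing.Theory Num.Theory.
Import numFieldNormedType.Exports.
Local Open Scope classical_set_scope.
Local Open Scope ring_scope.

(* Around any time t, a curve g in Geo f agrees with f on a chord [alpha, beta],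
   and f(a, b, .) moves on the line a + R e, e = (a - b)/|a - b|, with
   e-coordinate v^-1 of an affine function of time.  Hence locally
   g(u) = a + (v^-1(c u + d) - (a e)) e, so g' = c (v^-1)' e and
   g'' = c^2 (v^-1)'' e.  Differentiating (v^-1)'(y) v'(v^-1 y) = 1 gives
   (v^-1)'' = - r(v^-1) ((v^-1)')^2, while (g e) = v^-1(c u + d); thus
   g'' = - (c (v^-1)')^2 r((g e)) e = - s(g, g') by the homogeneity of s.
   Homogeneity holds because r is odd: v odd makes v' even and v'' odd. *)

Section Derive1.
Context {R : realType} {V : normedModType R}.
Implicit Types (f g : R -> V) (k : R -> R).

Lemma derivable_is_derive1 {f} {x : R} : derivable f x 1 -> is_derive x 1 f (derive1 f x).
Proof. by move=> /derivableP; rewrite derive1E. Qed.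

Lemma derive1_val {f} {x : R} {df : V} : is_derive x 1 f df -> derive1 f x = df.
Proof. by move=> fdf; rewrite derive1E derive_val. Qed.

Lemma is_deriveZr {k} (e : V) {x dk : R} :
  is_derive x 1 k dk -> is_derive x 1 (fun t => k t *: e) (dk *: e).
Proof.
move=> [kx <-].
have dZ : (fun h : R => h^-1 *: ((k (h *: 1 + x)) *: e - k x *: e)) @ 0^' --> 'D_1 k x *: e.
  under eq_fun do rewrite -scalerBl scalerA.
  exact: cvgZr_tmp.
by apply: DeriveDef; [apply/cvg_ex; exists ('D_1 k x *: e) | exact: cvg_lim dZ].
Qed.

Lemma near_eq_derive1 {f g} {t : R} : {near t, f =1 g} -> {near t, derive1 f =1 derive1 g}.
Proof.
move=> /near_join; apply: filterS => x fg.
by rewrite !derive1E; apply: near_eq_derive.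
Qed.

End Derive1.

Lemma is_derive_comp_affine {R : realType} {f : R -> R} (c d : R) {x : R} :
  derivable f (c * x + d) 1 ->
  is_derive x 1 (fun u => f (c * u + d)) (c * derive1 f (c * x + d)).
Proof.
move=> df; have affine : is_derive x 1 (c \*: id + cst d) c.
  by apply: is_derive_eq; rewrite /= scaler1 addr0.
have := @is_derive1_comp _ f _ x _ _ (derivable_is_derive1 df) affine.
by rewrite mulrC.
Qed.

Lemma derive1_parity {R : realType} (k : R -> R) (s : R) :
  (forall x, derivable k x 1) -> (forall x, k (- x) = s * k x) ->
  forall x, derive1 k (- x) = - s * derive1 k x.
Proof.
move=> dk ks x.
have kN : k \o -%R = s \*: k by apply/funext => y /=; rewrite ks.
have := is_derive1_comp (derivable_is_derive1 (dk (- x))) (is_deriveNid x 1).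
rewrite kN => /derive1_val; rewrite derive1E deriveZ ?dk // -derive1E.
move=> h; rewrite -[LHS]opprK -[in LHS](mulrN1 (derive1 k (- x))) -h.
by rewrite /GRing.scale /= mulNr.
Qed.

Section InverseDerivatives.
Context {R : realType} {v w : R -> R}.
Hypotheses (vK : cancel v w) (wK : cancel w v).
Hypotheses (dv : forall x : R, derivable v x 1) (dw : forall x : R, derivable w x 1).

Lemma derive1_cancel x : derive1 w (v x) * derive1 v x = 1.
Proof.
rewrite -derive1_comp //.
have -> : w \o v = id by apply/funext => y /=; rewrite vK.
exact: derive1_id.
Qed.

Lemma derive1_cancel_neq0 x : derive1 v x != 0.
Proof.
by apply: contra_eq_neq (derive1_cancel x) => ->; rewrite mulr0 eq_sym oner_neq0.
Qed.

Hypotheses (dv2 : forall x : R, derivable (derive1 v) x 1).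
Hypotheses (dw2 : forall x : R, derivable (derive1 w) x 1).

Lemma derive2_inverse {r : R -> R} :
  (forall x, derive1 (derive1 v) x = r x * derive1 v x) ->
  forall y, derive1 (derive1 w) y = - r (w y) * derive1 w y ^+ 2.
Proof.
move=> hr y.
have one : derive1 w * (derive1 v \o w) = cst 1.
  apply/funext => z; change (derive1 w z * derive1 v (w z) = 1).
  by rewrite -{1}(wK z) derive1_cancel.
have := is_deriveM (derivable_is_derive1 (dw2 y))
  (is_derive1_comp (derivable_is_derive1 (dv2 (w y))) (derivable_is_derive1 (dw y))).
rewrite one => /derive1_val; rewrite derive1_cst hr /= => /esym/eqP.
have := derive1_cancel_neq0 (w y).
set a := derive1 (derive1 w) y; set b := derive1 w y; set c := derive1 v (w y).
move=> c0 h; apply/eqP; rewrite -(inj_eq (mulfI c0)).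
by apply/eqP; move: h; rewrite /GRing.scale /=; lra.
Qed.
End InverseDerivatives.

Lemma derive2_ratio_odd {R : realType} {v r : R -> R} :
  (forall x, derivable v x 1) -> (forall x : R, derivable (derive1 v) x 1) ->
  (forall x, derive1 v x != 0) -> (forall x, v (- x) = - v x) ->
  (forall x, derive1 (derive1 v) x = r x * derive1 v x) ->
  forall x, r (- x) = - r x.
Proof.
move=> dv dv2 dv0 vN hr x.
have v'N : forall y, derive1 v (- y) = 1 * derive1 v y.
  by move=> y; rewrite (derive1_parity _ (-1) dv) ?opprK // => z; rewrite vN mulN1r.
have := derive1_parity _ 1 dv2 v'N x.
by rewrite !hr v'N mul1r mulN1r -mulNr => /(mulIf (dv0 x)).
Qed.

Section InnerProduct.
Context {R : realType} {n : nat}.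
Implicit Types (a b c : 'rV[R]_n) (k : R).

Lemma ipdotE a b : ipdot a b = \sum_j a 0 j * b 0 j.
Proof. by rewrite /ipdot !mxE; apply: eq_bigr => j _; rewrite !mxE. Qed.

Lemma ipdotC a b : ipdot a b = ipdot b a.
Proof. by rewrite /ipdot -[a *m _]trmxK trmx_mul trmxK mxE. Qed.

Lemma ipdotDl a b c : ipdot (a + b) c = ipdot a c + ipdot b c.
Proof. by rewrite /ipdot mulmxDl mxE. Qed.

Lemma ipdotZl k a c : ipdot (k *: a) c = k * ipdot a c.
Proof. by rewrite /ipdot -scalemxAl mxE. Qed.

Lemma ipdotZr k a c : ipdot c (k *: a) = k * ipdot c a.
Proof. by rewrite ipdotC ipdotZl ipdotC. Qed.

Lemma ipdotBl a b c : ipdot (a - b) c = ipdot a c - ipdot b c.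
Proof. by rewrite ipdotDl -scaleN1r ipdotZl mulN1r. Qed.

Lemma ipdot_ge0 a : 0 <= ipdot a a.
Proof. by rewrite ipdotE sumr_ge0 // => j _; rewrite -expr2 sqr_ge0. Qed.

Lemma ipdot_eq0 a : (ipdot a a == 0) = (a == 0).
Proof.
apply/idP/eqP => [|->]; last by rewrite /ipdot mul0mx mxE.
rewrite ipdotE psumr_eq0 => [/allP a0|j _]; last by rewrite -expr2 sqr_ge0.
apply/rowP => j; rewrite mxE; apply/eqP.
by rewrite -sqrf_eq0 expr2; have /implyP := a0 j (mem_index_enum j); apply.
Qed.

Lemma ipnorm_sqr a : ipnorm a ^+ 2 = ipdot a a.
Proof. by rewrite sqr_sqrtr // ipdot_ge0. Qed.

Lemma ipnorm_ge0 a : 0 <= ipnorm a.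
Proof. exact: sqrtr_ge0. Qed.

Lemma ipnorm_eq0 a : (ipnorm a == 0) = (a == 0).
Proof. by rewrite sqrtr_eq0 le_eqVlt ltNge ipdot_ge0 orbF ipdot_eq0. Qed.

Lemma ipnormZ k a : ipnorm (k *: a) = `|k| * ipnorm a.
Proof. by rewrite /ipnorm ipdotZl ipdotZr mulrA -expr2 sqrtrM ?sqr_ge0 // sqrtr_sqr. Qed.
End InnerProduct.

Section Geodesics.
Context {R : realType} {n : nat}.
Implicit Types (a b e x : 'rV[R]_n) (r : R -> R).

Lemma edirK a b : ipnorm (a - b) *: edir a b = a - b.
Proof.
rewrite /edir scalerA; have [->|ab] := eqVneq (a - b) 0; first by rewrite scaler0.
by rewrite divff ?scale1r // ipnorm_eq0.
Qed.

Lemma edir_id a : edir a a = 0.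
Proof. by rewrite /edir subrr scaler0. Qed.

Lemma ipnorm_edir a b : a != b -> ipnorm (edir a b) = 1.
Proof.
by move=> ab; rewrite /edir ipnormZ normfV ger0_norm ?ipnorm_ge0 // mulVf // ipnorm_eq0 subr_eq0.
Qed.

Lemma s_geo_unit r x e : ipnorm e = 1 -> s_geo r x e = r (ipdot x e) *: e.
Proof. by move=> e1; rewrite /s_geo -ipnorm_eq0 e1 oner_eq0 divr1 mulr1. Qed.

Lemma s_geoZ r : (forall y, r (- y) = - r y) ->
  forall (lam : R) x e, s_geo r x (lam *: e) = lam ^+ 2 *: s_geo r x e.
Proof.
move=> rN lam x e; rewrite /s_geo scaler_eq0.
have [->|lam0] /= := eqVneq lam 0; first by rewrite expr0n scale0r.
have [_|e0] /= := eqVneq e 0; first by rewrite scaler0.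
have ne0 : ipnorm e != 0 by rewrite ipnorm_eq0.
rewrite ipdotZr ipnormZ !scalerA -mulf_div; congr (_ *: _).
have [lam_gt0|lam_le0] := ltrP 0 lam.
  by rewrite gtr0_norm // divff // mul1r; ring.
rewrite ler0_norm // invrN mulrN divff // mulN1r rN; ring.
Qed.

Lemma fgeoE (v w : R -> R) a b (gam : R) :
  fgeo v w a b gam = a + (w ((1 - gam) * v (ipdot a (edir a b))
    + gam * v (ipdot b (edir a b))) - ipdot a (edir a b)) *: edir a b.
Proof.
rewrite /fgeo /vab; have [<-|ab] := eqVneq a b; first by rewrite edir_id scaler0 addr0.
have ee : ipdot (edir a b) (edir a b) = 1 by rewrite -ipnorm_sqr ipnorm_edir // expr1n.
have bE : b = a - ipnorm (a - b) *: edir a b by rewrite edirK opprB addrC subrK.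
move: (edir a b) (ipnorm (a - b)) ee bE => e d ee bE.
set y := _ + _ *: (b + _).
have ye : ipdot y e = (1 - gam) * v (ipdot a e) + gam * v (ipdot b e).
  rewrite /y !(ipdotDl, ipdotZl) ee; ring.
rewrite ye; apply/rowP => j; rewrite /y {3}bE ipdotBl ipdotZl ee bE !mxE; ring.
Qed.

(* For e = 0 the chord is the constant a: this covers f(a, a, gamma) = a. *)
Definition chord (w : R -> R) a e (c d : R) (u : R) : 'rV[R]_n :=
  a + (w (c * u + d) - ipdot a e) *: e.

Section ChordDerivatives.
Context {w : R -> R} (a e : 'rV[R]_n) (c d : R).
Hypothesis dw : forall x : R, derivable w x 1.

Lemma is_derive_chord (u : R) :
  is_derive u 1 (chord w a e c d) ((c * derive1 w (c * u + d)) *: e).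
Proof.
have dk := is_deriveB (is_derive_comp_affine c d (dw (c * u + d)))
  (is_derive_cst (ipdot a e) u 1).
apply: (is_derive_eq (is_deriveD (is_derive_cst a u 1) (is_deriveZr e dk))).
by rewrite add0r subr0.
Qed.

Lemma derive1_chord : derive1 (chord w a e c d) = fun u => (c * derive1 w (c * u + d)) *: e.
Proof. by apply/funext => u; rewrite (derive1_val (is_derive_chord u)). Qed.

Hypothesis dw2 : forall x : R, derivable (derive1 w) x 1.

Lemma is_derive2_chord (u : R) : is_derive u 1 (derive1 (chord w a e c d))
  ((c ^+ 2 * derive1 (derive1 w) (c * u + d)) *: e).
Proof.
have dk := is_deriveZ c (is_derive_comp_affine c d (dw2 (c * u + d))).
rewrite derive1_chord; apply: (is_derive_eq (is_deriveZr e dk)).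
by rewrite /GRing.scale /= mulrA expr2.
Qed.

Lemma chord_ode r : (forall y, r (- y) = - r y) ->
  (forall y, derive1 (derive1 w) y = - r (w y) * derive1 w y ^+ 2) ->
  e = 0 \/ ipnorm e = 1 ->
  forall u, derive1 (derive1 (chord w a e c d)) u
            + s_geo r (chord w a e c d u) (derive1 (chord w a e c d) u) = 0.
Proof.
move=> rN w'' he u; rewrite (derive1_val (is_derive2_chord u)) derive1_chord s_geoZ //.
case: he => [->|e1]; first by rewrite /s_geo eqxx !scaler0 addr0.
have ee : ipdot e e = 1 by rewrite -ipnorm_sqr e1 expr1n.
rewrite s_geo_unit // /chord ipdotDl ipdotZl ee mulr1 (addrC (ipdot a e)) subrK.
by rewrite scalerA -scalerDl w'' [X in X *: e](_ : _ = 0) ?scale0r //; ring.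
Qed.
End ChordDerivatives.

Lemma Geo_near_chord {v w : R -> R} {I : set R} {g : R -> 'rV[R]_n} {t : R} :
  in_Geo v w I g -> I t ->
  exists a e (c d : R), (e = 0 \/ ipnorm e = 1) /\ {near t, chord w a e c d =1 g}.
Proof.
move=> [_ geo] It; have [al [be [_ _ alt tbe arc]]] := geo t It.
have be_al : 0 < be - al by rewrite subr_gt0 (lt_trans alt tbe).
set a := g al; set b := g be; set e := edir a b.
set c := (v (ipdot b e) - v (ipdot a e)) / (be - al).
exists a, e, c, (v (ipdot a e) - c * al); split.
  by have [ab|ab] := eqVneq a b; [left; rewrite /e ab edir_id | right; apply: ipnorm_edir].
have : t \in `]al, be[ by rewrite in_itv /= alt tbe.
move=> /near_in_itvoo; apply: filterS => u; rewrite in_itv /= => /andP[alu ube].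
set gam := (u - al) / (be - al).
have -> : u = (1 - gam) * al + gam * be by rewrite /gam; field; rewrite gt_eqF.
have gam01 : 0 <= gam <= 1.
  apply/andP; split; first by rewrite divr_ge0 ?(ltW be_al) // subr_ge0 ltW.
  by rewrite ler_pdivrMr // mul1r lerD2r ltW.
rewrite (arc gam gam01) fgeoE /chord -/a -/b -/e; congr (a + (w _ - _) *: e).
by rewrite /c /gam; field; rewrite gt_eqF.
Qed.
End Geodesics.

Lemma smooth_derivable {R : realType} {h : R -> R} :
  smooth_fun h -> forall x : R, derivable h x 1.
Proof. by move=> sh; apply: (sh 0%N). Qed.

Lemma smooth_derivable2 {R : realType} {h : R -> R} :
  smooth_fun h -> forall x : R, derivable (derive1 h) x 1.
Proof. by move=> sh; apply: (sh 1%N). Qed.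

Theorem mainTheorem9 (R : realType) (n : nat) (v vinv r : R -> R)
  (hv : odd_homeo v vinv) (hdiff : smooth_diffeo v vinv)
  (hr : forall x : R, derive1n 2 v x = r x * derive1n 1 v x) :
  (forall (lam : R) (a b : 'rV[R]_n),
     s_geo r a (lam *: b) = lam ^+ 2 *: s_geo r a b) /\
  (forall (I : set R) (g : R -> 'rV[R]_n), in_Geo v vinv I g ->
     forall t, I t ->
       [/\ derivable g t 1, derivable (derive1 g) t 1 &
           derive1n 2 g t + s_geo r (g t) (derive1 g t) = 0]).
Proof.
have [vK wK sv sw] := hdiff; have [vN _ _ _ _] := hv.
have [dv dv2] := (smooth_derivable sv, smooth_derivable2 sv).
have [dw dw2] := (smooth_derivable sw, smooth_derivable2 sw).
have rN := derive2_ratio_odd dv dv2 (derive1_cancel_neq0 vK dv dw) vN hr.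
have w'' := derive2_inverse vK wK dv dw dv2 dw2 hr.
split=> [|I g geo t It]; first exact: s_geoZ.
have [a [e [c [d [he near_g]]]]] := Geo_near_chord geo It.
have near_g' := near_eq_derive1 near_g.
split.
- by case: (is_derive_chord a e c d dw t) => /(near_eq_derivable near_g).
- by case: (is_derive2_chord a e c d dw dw2 t) => /(near_eq_derivable near_g').
- rewrite /= -(nbhs_singleton near_g) -(nbhs_singleton near_g').
  rewrite -(nbhs_singleton (near_eq_derive1 near_g')).
  exact: chord_ode.
Qed.
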